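(* Let $m$ be a positive integer satisfying $\sigma(m)\equiv 0\pmod m$, $\sigma_2(m)\equiv 2\pmod m$ and $m\equiv 0\pmod 4$. Then all odd prime factors of $m$ except exactly one occur in $m$ with even multiplicity. The remaining odd prime factor $q$ occurs with multiplicity congruent to $1 \bmod 4$, and $q\equiv 3\pmod 4$.
   Context: For integers $k\ge 0$ and $n\ge 1$, $\sigma_k(n)=\sum_{d\mid n} d^k$, and $\sigma=\sigma_1$. *)

From mathcomp Require Import all_boot.
Set Implicit Arguments. Unset Strict Implicit. Unset Printing Implicit Defensive.

Definition sigmak (k n : nat) : nat := \sum_(d <- divisors n) d ^ k.
Definition sigma (n : nat) : nat := sigmak 1 n.

From mathcomp Require Import all_boot zify.
Set Implicit Arguments. Unset Strict Implicit. Unset Printing Implicit Defensive.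

(* Write m = 2^a * n with n odd.  Since sigma_k is multiplicative and
   sigma_k(2^a) = 1 + 2^k + ... is congruent to 1 modulo 2^k, the two
   hypotheses (read modulo 4, which divides m) transfer to the odd part:
   sigma_2(n) = 2 and sigma(n) = 0 (mod 4).  For an odd prime p we have
   p^2 = 1 (mod 4), hence sigma_2(p^e) = e + 1 (mod 4), so
   sigma_2(n) = prod_p (e_p + 1) (mod 4).  A product congruent to 2 modulo 4
   has exactly one factor congruent to 2 and all other factors odd: this
   singles out q with e_q = 1 (mod 4), all other exponents being even.
   Finally, if q = 1 (mod 4) then sigma(q^e_q) = e_q + 1 = 2 (mod 4), while
   sigma(p^e_p) is odd for the other p, so sigma(n) = 2 (mod 4), a
   contradiction; hence q = 3 (mod 4). *)

Lemma gcdn_mul_divisors a b u v :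
  coprime a b -> u %| a -> v %| b -> gcdn a (u * v) = u.
Proof.
move=> cab ua vb; rewrite Gauss_gcdl; first exact/gcdn_idPr.
exact: coprime_dvdr vb cab.
Qed.

Lemma divisor_coprime_split a b d :
  coprime a b -> d %| a * b -> gcdn d a * gcdn d b = d.
Proof.
move=> cab dab; apply/eqP; rewrite eqn_dvd; apply/andP; split.
- rewrite Gauss_dvd ?dvdn_gcdl //.
  exact: coprime_dvdl (dvdn_gcdr _ _) (coprime_dvdr (dvdn_gcdr _ _) cab).
- by rewrite muln_gcdr dvdn_gcd dvdn_mull //= muln_gcdl dvdn_gcd dab dvdn_mulr.
Qed.

Lemma divisors_coprime_mul a b : 0 < a -> 0 < b -> coprime a b ->
  perm_eq (divisors (a * b)) [seq u * v | u <- divisors a, v <- divisors b].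
Proof.
move=> a_gt0 b_gt0 cab; have ab_gt0 : 0 < a * b by rewrite muln_gt0 a_gt0.
apply: uniq_perm; first exact: divisors_uniq.
- apply: allpairs_uniq; try exact: divisors_uniq.
  move=> [u1 v1] [u2 v2] /allpairsP[[x1 y1] [/= x1a y1b [-> ->]]].
  move=> /allpairsP[[x2 y2] [/= x2a y2b [-> ->]]] /= E.
  rewrite -!dvdn_divisors // in x1a y1b x2a y2b.
  have cba : coprime b a by rewrite coprime_sym.
  have -> : x1 = x2.
    by rewrite -(gcdn_mul_divisors cab x1a y1b) E (gcdn_mul_divisors cab x2a y2b).
  have -> // : y1 = y2.
  by rewrite -(gcdn_mul_divisors cba y1b x1a) mulnC E mulnC (gcdn_mul_divisors cba y2b x2a).
- move=> d; rewrite -dvdn_divisors //; apply/idP/allpairsP.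
  + move=> dab; exists (gcdn d a, gcdn d b).
    by rewrite -!dvdn_divisors ?dvdn_gcdr ?divisor_coprime_split.
  + by move=> [[u v] /= [+ + ->]]; rewrite -!dvdn_divisors //; apply: dvdn_mul.
Qed.

Lemma sigmak_mul k a b : 0 < a -> 0 < b -> coprime a b ->
  sigmak k (a * b) = sigmak k a * sigmak k b.
Proof.
move=> a_gt0 b_gt0 cab; rewrite /sigmak (perm_big _ (divisors_coprime_mul a_gt0 b_gt0 cab)).
rewrite big_allpairs_dep big_distrlr /=.
by apply: eq_bigr => u _; apply: eq_bigr => v _; rewrite expnMn.
Qed.

Lemma divisors_prime_pow p e : prime p ->
  perm_eq (divisors (p ^ e)) [seq p ^ i | i <- iota 0 e.+1].
Proof.
move=> p_pr; have pe_gt0 : 0 < p ^ e by rewrite expn_gt0 prime_gt0.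
apply: uniq_perm; first exact: divisors_uniq.
  by rewrite map_inj_uniq ?iota_uniq //; apply: expnI; apply: prime_gt1.
move=> d; rewrite -dvdn_divisors //; apply/idP/mapP.
- by case/(dvdn_pfactor _ _ p_pr) => i le_ie ->; exists i; rewrite // mem_iota.
- by case=> i; rewrite mem_iota => /andP[_ lt_ie] ->; apply/(dvdn_pfactor _ _ p_pr); exists i.
Qed.

Lemma sigmak_prime_pow k p e : prime p ->
  sigmak k (p ^ e) = \sum_(i < e.+1) (p ^ k) ^ i.
Proof.
move=> p_pr; rewrite /sigmak (perm_big _ (divisors_prime_pow e p_pr)) big_map.
rewrite -(big_mkord xpredT (fun i => (p ^ k) ^ i)).
by apply: eq_bigr => i _; rewrite -!expnM mulnC.
Qed.

Lemma sigmak1 k : sigmak k 1 = 1.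
Proof. by rewrite /sigmak (_ : divisors 1 = [:: 1]) // big_seq1 exp1n. Qed.

Lemma sigmak_prod_prime_pows k (s : seq nat) (e : nat -> nat) :
  uniq s -> all prime s ->
  sigmak k (\prod_(p <- s) p ^ e p) = \prod_(p <- s) sigmak k (p ^ e p).
Proof.
elim: s => [|p s IH]; first by rewrite !big_nil sigmak1.
rewrite /= => /andP[p_notin_s s_uniq] /andP[p_pr s_pr].
have s_pos q : q \in s -> 0 < q ^ e q.
  by move=> qs; rewrite expn_gt0 prime_gt0 //; apply: (allP s_pr).
have prod_s_gt0 : 0 < \prod_(q <- s) q ^ e q by rewrite big_seq prodn_cond_gt0.
have pe_gt0 : 0 < p ^ e p by rewrite expn_gt0 prime_gt0.
rewrite !big_cons sigmak_mul ?IH //.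
apply: coprimeXl; rewrite big_seq; apply: (big_ind (coprime p)) => [|x y|q qs].
- exact: coprimen1.
- by rewrite coprimeMr => -> ->.
apply: coprimeXr; rewrite prime_coprime // dvdn_prime2 //; last exact: (allP s_pr).
by apply: contraNneq p_notin_s => ->.
Qed.

Lemma sigmak_prime_decomp k n : 0 < n ->
  sigmak k n = \prod_(p <- primes n) sigmak k (p ^ logn p n).
Proof.
move=> n_gt0; rewrite -sigmak_prod_prime_pows ?primes_uniq //.
  by rewrite {1}(prod_prime_decomp n_gt0) prime_decompE big_map.
by apply/allP => p; rewrite mem_primes => /andP[].
Qed.

Lemma geom_sum_mod_base x N : \sum_(i < N.+1) x ^ i = 1 %[mod x].
Proof.
rewrite big_ord_recl expn0 -modnDmr (_ : (\sum_(i < N) _) %% x = 0) ?addn0 //.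
by apply/eqP; apply: dvdn_sum => i _; rewrite expnS dvdn_mulr.
Qed.

Lemma geom_sum_mod_one x d N : x = 1 %[mod d] -> \sum_(i < N) x ^ i = N %[mod d].
Proof.
move=> x1; elim: N => [|N IH]; first by rewrite big_ord0.
by rewrite big_ord_recr /= -modnDm IH -modnXm x1 modnXm exp1n modnDm addn1.
Qed.

Lemma sigmak_prime_pow_mod_base k p e : prime p ->
  sigmak k (p ^ e) = 1 %[mod p ^ k].
Proof. by move=> p_pr; rewrite sigmak_prime_pow // geom_sum_mod_base. Qed.

Lemma sigmak_prime_pow_mod k p e d : prime p -> p ^ k = 1 %[mod d] ->
  sigmak k (p ^ e) = e.+1 %[mod d].
Proof. by move=> p_pr pk1; rewrite sigmak_prime_pow // geom_sum_mod_one. Qed.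

Lemma prod_modn (s : seq nat) (F G : nat -> nat) d :
  (forall i, i \in s -> F i = G i %[mod d]) ->
  \prod_(i <- s) F i = \prod_(i <- s) G i %[mod d].
Proof.
elim: s => [|x s IH] FG; first by rewrite !big_nil.
rewrite !big_cons -modnMm FG ?mem_head // IH ?modnMm // => i si.
by apply: FG; rewrite inE si orbT.
Qed.

Lemma odd_prod (s : seq nat) (F : nat -> nat) :
  odd (\prod_(i <- s) F i) = all (fun i => odd (F i)) s.
Proof. by elim: s => [|x s IH]; rewrite ?big_nil ?big_cons //= oddM IH. Qed.

Lemma mod4_mul_odd x y r : odd y -> ~~ odd r ->
  (x * y = r %[mod 4]) <-> (x = r %[mod 4]).
Proof.
move=> oy er; rewrite -modnMml -modnMmr.
have := ltn_pmod x (isT : 0 < 4); have := ltn_pmod y (isT : 0 < 4).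
split; nia.
Qed.

Lemma prod_mod4_eq2 (s : seq nat) (F : nat -> nat) : uniq s ->
  \prod_(i <- s) F i = 2 %[mod 4] ->
  exists2 q, q \in s & F q = 2 %[mod 4] /\ {in s, forall i, i != q -> odd (F i)}.
Proof.
elim: s => [|x s IH]; first by rewrite big_nil.
rewrite /= big_cons => /andP[x_notin_s s_uniq].
have [odd_Fx | even_Fx] := boolP (odd (F x)).
- rewrite mulnC mod4_mul_odd // => /(IH s_uniq)[q qs [Fq2 odd_others]].
  exists q; first by rewrite inE qs orbT.
  split=> // i; rewrite inE => /orP[/eqP -> // | i_s]; exact: odd_others.
- move=> prod2; have odd_rest : odd (\prod_(i <- s) F i).
    by move: prod2 even_Fx; nia.
  exists x; first exact: mem_head.
  split; first by move: prod2; rewrite mod4_mul_odd.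
  move=> i; rewrite inE => /orP[/eqP -> | i_s _]; first by rewrite eqxx.
  by move: odd_rest; rewrite odd_prod => /allP; apply.
Qed.

Lemma odd_sqr_mod4 p : odd p -> p ^ 2 = 1 %[mod 4].
Proof.
move=> odd_p; rewrite -mulnn -modnMm.
have := ltn_pmod p (isT : 0 < 4); nia.
Qed.

Lemma odd_prime_factor n p : odd n -> p \in primes n -> odd p.
Proof.
move=> odd_n; rewrite mem_primes => /and3P[p_pr _ p_dvd_n].
by case: (even_prime p_pr) => // p2; move: p_dvd_n; rewrite p2 dvdn2 odd_n.
Qed.

Lemma sigma2_odd_mod4 n : odd n ->
  sigmak 2 n = \prod_(p <- primes n) (logn p n).+1 %[mod 4].
Proof.
move=> odd_n; rewrite sigmak_prime_decomp ?odd_gt0 //.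
apply: prod_modn => p pn; apply: sigmak_prime_pow_mod.
- by move: pn; rewrite mem_primes => /andP[].
- exact/odd_sqr_mod4/(odd_prime_factor odd_n).
Qed.

(* sigma(p^e) is odd for an odd prime p and even e (e + 1 odd terms). *)
Lemma odd_sigma_prime_pow p e : prime p -> odd p -> ~~ odd e ->
  odd (sigmak 1 (p ^ e)).
Proof.
move=> p_pr odd_p even_e; have p1 : p ^ 1 = 1 %[mod 2] by rewrite expn1 modn2 odd_p.
by have := sigmak_prime_pow_mod e p_pr p1; rewrite !modn2 /= even_e; case: odd.
Qed.

Lemma odd_part_structure n :
  odd n -> sigmak 2 n = 2 %[mod 4] -> sigmak 1 n = 0 %[mod 4] ->
  exists2 q, q \in primes n &
    [/\ logn q n = 1 %[mod 4], q = 3 %[mod 4] &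
        {in primes n, forall p, p != q -> ~~ odd (logn p n)}].
Proof.
move=> odd_n sig2 sig1; have n_gt0 := odd_gt0 odd_n.
rewrite sigma2_odd_mod4 // in sig2.
have [q qn [eq2 odd_others]] := prod_mod4_eq2 (primes_uniq n) sig2.
have even_others : {in primes n, forall p, p != q -> ~~ odd (logn p n)}.
  by move=> p pn /(odd_others p pn); rewrite oddS.
have q_pr : prime q by move: qn; rewrite mem_primes => /andP[].
have odd_q := odd_prime_factor odd_n qn.
exists q => //; split=> //; first by move: eq2; lia.
have [q1 | //] : q = 1 %[mod 4] \/ q = 3 %[mod 4] by move: odd_q; lia.
have odd_rest : odd (\prod_(p <- primes n | p != q) sigmak 1 (p ^ logn p n)).
  rewrite -big_filter odd_prod; apply/allP => p; rewrite mem_filter => /andP[pq pn].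
  apply: odd_sigma_prime_pow; last exact: even_others.
    by move: pn; rewrite mem_primes => /andP[].
  exact: odd_prime_factor pn.
move: sig1; rewrite sigmak_prime_decomp // (bigD1_seq q) ?primes_uniq //.
rewrite mod4_mul_odd // sigmak_prime_pow_mod ?expn1 //.
by move: eq2; lia.
Qed.

Lemma odd_sigmak_two_pow k e : 0 < k -> odd (sigmak k (2 ^ e)).
Proof.
move=> k_gt0; have := sigmak_prime_pow_mod_base k e (isT : prime 2).
move/(congr1 (modn^~ 2)); rewrite /= !modn_dvdm ?dvdn_exp // !modn2.
by case: odd.
Qed.

Lemma logn_odd_mul_two_pow p n a : odd p -> 0 < n ->
  logn p (n * 2 ^ a) = logn p n.
Proof.
move=> odd_p n_gt0; rewrite lognM ?expn_gt0 // lognX (@logn_prime p 2) //.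
by case: eqP odd_p => [-> | _ _] //; rewrite muln0 addn0.
Qed.

Theorem mainTheorem6 (m : nat) :
  0 < m ->
  sigma m = 0 %[mod m] ->
  sigmak 2 m = 2 %[mod m] ->
  m = 0 %[mod 4] ->
  exists q : nat,
    [/\ prime q /\ odd q, q %| m,
        logn q m = 1 %[mod 4], q = 3 %[mod 4] &
        forall p : nat, prime p -> odd p -> p %| m -> p != q ->
          ~~ odd (logn p m)].
Proof.
move=> m_gt0 sig1 sig2 m4; have dvd4_m : 4 %| m by apply/eqP.
have [n coprime_2n m_eq] := pfactor_coprime (isT : prime 2) m_gt0.
set a := logn 2 m in m_eq.
have odd_n : odd n by rewrite -coprime2n.
have n_gt0 := odd_gt0 odd_n.
have sigmak_m k : sigmak k m = sigmak k n * sigmak k (2 ^ a).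
  rewrite m_eq sigmak_mul ?expn_gt0 //.
  by apply: coprimeXr; rewrite coprime_sym.
have sig2n : sigmak 2 n = 2 %[mod 4].
  rewrite -(mod4_mul_odd _ (odd_sigmak_two_pow a (isT : 0 < 2))) // -sigmak_m.
  by rewrite -(modn_dvdm _ dvd4_m) sig2 modn_dvdm.
have sig1n : sigmak 1 n = 0 %[mod 4].
  rewrite -(mod4_mul_odd _ (odd_sigmak_two_pow a (isT : 0 < 1))) // -sigmak_m.
  by rewrite -(modn_dvdm _ dvd4_m) sig1 modn_dvdm.
have [q qn [eq1 q3 even_others]] := odd_part_structure odd_n sig2n sig1n.
move: (qn); rewrite mem_primes => /and3P[q_pr _ q_dvd_n].
have odd_q := odd_prime_factor odd_n qn.
exists q; split=> //.
- by rewrite m_eq dvdn_mulr.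
- by rewrite m_eq logn_odd_mul_two_pow.
move=> p p_pr odd_p p_dvd_m pq; rewrite m_eq logn_odd_mul_two_pow //.
apply: even_others pq; rewrite mem_primes p_pr n_gt0 /=.
by move: p_dvd_m; rewrite m_eq Gauss_dvdl // coprimeXr // coprime_sym coprime2n.
Qed.
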